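(* Let $D$ be a unique factorization domain and let $a$ be a nonzero element of $D$. Then the congruence $P_{J([a]_\sim)}$ on the semigroup $D'=D_{mult}/\sim$ has finite index, and $d(a)=|D'/P_{J([a]_\sim)}|$.
   Context: $D_{mult}$ is the multiplicative semigroup of $D$; $\sim$ is the associate relation, a congruence on $D_{mult}$; $D'=D_{mult}/\sim$ and $[x]_\sim$ denotes the $\sim$-class of $x$. $J([a]_\sim)$ is the ideal of the semigroup $D'$ generated by $[a]_\sim$. For a semigroup $S$, $H\subseteq S$, $a\in S$: $H\dots a=\{(x,y)\in S\times S: xay\in H\}$ and $P_H=\{(a,b)\in S\times S: H\dots a=H\dots b\}$ (computed here in $S=D'$). $d(a)$ is the number of pairwise non-associated divisors of $a$ in $D$ (equivalently, the number of distinct divisors of $[a]_\sim$ in $D'$). *)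

From HB Require Import structures.
From mathcomp Require Import all_boot all_algebra generic_quotient.
From mathcomp Require Import boolp.
Set Implicit Arguments. Unset Strict Implicit. Unset Printing Implicit Defensive.
Import GRing.Theory.
Local Open Scope ring_scope.
Local Open Scope quotient_scope.

Definition dvdr {D : idomainType} (x y : D) : Prop := exists z : D, y = x * z.

Definition assoc {D : idomainType} (x y : D) : Prop := dvdr x y /\ dvdr y x.

Definition irreducible_elt {D : idomainType} (p : D) : Prop :=
  p != 0 /\ ~ (p \is a GRing.unit) /\
  (forall y z : D, p = y * z -> y \is a GRing.unit \/ z \is a GRing.unit).

Definition UFD (D : idomainType) : Prop :=
  (forall x : D, x != 0 -> ~ (x \is a GRing.unit) ->
     exists s : seq D, (forall p, p \in s -> irreducible_elt p) /\
                       x = \prod_(p <- s) p)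
  /\
  (forall s t : seq D,
     (forall p, p \in s -> irreducible_elt p) ->
     (forall p, p \in t -> irreducible_elt p) ->
     assoc (\prod_(p <- s) p) (\prod_(p <- t) p) ->
     exists t' : seq D, perm_eq t t' /\ size s = size t' /\
       forall i, (i < size s)%N -> assoc (nth 0 s i) (nth 0 t' i)).

Definition assocb {D : idomainType} (x y : D) : bool := `[< assoc x y >].

Lemma assocb_refl (D : idomainType) : reflexive (@assocb D).
Proof. by move=> x; apply/asboolP; split; exists 1; rewrite mulr1. Qed.

Lemma assocb_sym (D : idomainType) : symmetric (@assocb D).
Proof.
by move=> x y; apply/asboolP/asboolP => -[h1 h2]; split.
Qed.

Lemma assocb_trans (D : idomainType) : transitive (@assocb D).
Proof.
move=> y x z /asboolP [[a hx] [b hy]] /asboolP [[c hz] [d hx']].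
apply/asboolP; split.
  by exists (a * c); rewrite hz hx mulrA.
by exists (d * b); rewrite hy hx' mulrA.
Qed.

Definition assoc_equiv (D : idomainType) : equiv_rel D :=
  EquivRel (@assocb D) (@assocb_refl D) (@assocb_sym D) (@assocb_trans D).

Definition Dq (D : idomainType) := {eq_quot (assoc_equiv D)}.

Definition cls {D : idomainType} (x : D) : Dq D := \pi_(Dq D) x.

(* the multiplication of D' : [x][y] = [xy] (well defined since ~ is a
   congruence on D_mult; computed on representatives) *)
Definition mulDq {D : idomainType} (X Y : Dq D) : Dq D :=
  cls (repr X * repr Y).

Section Semigroup.
Variables (S : Type) (mul : S -> S -> S).

Definition lmul1 (u : option S) (x : S) : S :=
  if u is Some u' then mul u' x else x.
Definition rmul1 (x : S) (v : option S) : S :=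
  if v is Some v' then mul x v' else x.

(* J(s) = S^1 s S^1, the ideal of S generated by s *)
Definition ideal_gen (s : S) : S -> Prop :=
  fun x => exists u v : option S, x = lmul1 u (rmul1 s v).

Definition Hdots (H : S -> Prop) (a : S) : S * S -> Prop :=
  fun xy => H (mul (mul xy.1 a) xy.2).

Definition P_H (H : S -> Prop) (a b : S) : Prop :=
  forall xy : S * S, Hdots H a xy <-> Hdots H b xy.
End Semigroup.

Definition has_index (T : Type) (R : T -> T -> Prop) (n : nat) : Prop :=
  exists f : T -> 'I_n,
    (forall i : 'I_n, exists x, f x = i) /\ (forall x y, R x y <-> f x = f y).

(* d(a) = n: the maximal number of pairwise non-associated divisors of a in D
   is n, i.e. a system of representatives of the associate classes of the
   divisors of a has n elements. *)
Definition num_divisors (D : idomainType) (a : D) (n : nat) : Prop :=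
  exists s : seq D,
    size s = n /\
    (forall x, x \in s -> dvdr x a) /\
    (forall i j, (i < size s)%N -> (j < size s)%N ->
                 assoc (nth 0 s i) (nth 0 s j) -> i = j) /\
    (forall x, dvdr x a -> exists2 y, y \in s & assoc x y).

From mathcomp Require Import all_boot all_algebra generic_quotient.
From mathcomp Require Import boolp.
Set Implicit Arguments. Unset Strict Implicit. Unset Printing Implicit Defensive.
Import GRing.Theory.
Local Open Scope ring_scope.
Local Open Scope quotient_scope.

(* In D' the ideal J([a]) consists of the classes of the multiples of a, so
   [x] and [y] are P_J-related exactly when a | zx <-> a | zy for every z, i.e.
   when x and y have the same annihilator modulo a.  In a UFD every x has the
   same annihilator as gcd(a, x), and two divisors of a with the same
   annihilator are associates.  Hence the classes of the divisors of a form a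
   transversal of P_J; there are d(a) of them, finitely many because every
   divisor of a is associated to a subproduct of a factorization of a. *)

Section Divisibility.
Variable D : idomainType.
Implicit Types a b c p q x y z : D.

Lemma dvdr_refl x : dvdr x x. Proof. by exists 1; rewrite mulr1. Qed.

Lemma dvdr_trans x y z : dvdr x y -> dvdr y z -> dvdr x z.
Proof. by move=> [b ->] [c ->]; exists (b * c); rewrite mulrA. Qed.

Lemma dvdr_mulr x y z : dvdr x y -> dvdr x (y * z).
Proof. by move=> [b ->]; exists (b * z); rewrite mulrA. Qed.

Lemma dvdr_mull x y z : dvdr x y -> dvdr x (z * y).
Proof. by rewrite mulrC; apply: dvdr_mulr. Qed.

Lemma dvdr0 x : dvdr x 0. Proof. by exists 0; rewrite mulr0. Qed.

Lemma dvd1r x : dvdr 1 x. Proof. by exists x; rewrite mul1r. Qed.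

Lemma dvdr_mul2l c x y : dvdr x y -> dvdr (c * x) (c * y).
Proof. by move=> [b ->]; exists b; rewrite mulrA. Qed.

Lemma dvdr_pmul2l c x y : c != 0 -> dvdr (c * x) (c * y) <-> dvdr x y.
Proof.
move=> c0; split=> [[b]|]; last exact: dvdr_mul2l.
by rewrite -mulrA => /(mulfI c0) ->; exists b.
Qed.

Lemma dvdr_prod_mem q (s : seq D) : q \in s -> dvdr q (\prod_(p <- s) p).
Proof.
elim: s => // x s IHs; rewrite inE big_cons => /predU1P [->|/IHs].
  exact/dvdr_mulr/dvdr_refl.
exact: dvdr_mull.
Qed.

Lemma assoc_refl x : assoc x x. Proof. by split; apply: dvdr_refl. Qed.

Lemma assoc_sym x y : assoc x y -> assoc y x. Proof. by case. Qed.

Lemma assoc_trans x y z : assoc x y -> assoc y z -> assoc x z.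
Proof. by move=> [xy yx] [yz zy]; split; apply: dvdr_trans; eauto. Qed.

Lemma assoc_mul x x' y y' : assoc x x' -> assoc y y' -> assoc (x * y) (x' * y').
Proof.
move=> [[b x'E] [b' xE]] [[c y'E] [c' yE]]; split.
  by exists (b * c); rewrite x'E y'E mulrACA.
by exists (b' * c'); rewrite xE yE mulrACA.
Qed.

Lemma assoc_dvdl x x' y : assoc x x' -> dvdr x y <-> dvdr x' y.
Proof. by move=> [xx' x'x]; split; apply: dvdr_trans. Qed.

Lemma assoc_dvdr x y y' : assoc y y' -> dvdr x y <-> dvdr x y'.
Proof. by move=> [yy' y'y]; split=> /dvdr_trans; apply. Qed.

Definition ann_eq a x y := forall z, dvdr a (z * x) <-> dvdr a (z * y).

Lemma ann_eq_assoc a x y : assoc x y -> ann_eq a x y.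
Proof. by move=> xy z; apply: assoc_dvdr; apply: assoc_mul (assoc_refl z) xy. Qed.

Lemma ann_eq_assoc_divisors a d e :
  a != 0 -> dvdr d a -> dvdr e a -> ann_eq a d e -> assoc d e.
Proof.
move=> a0; suff dvd_ann : forall d' e', dvdr d' a -> ann_eq a d' e' -> dvdr d' e'.
  by move=> da ea de; split; apply: dvd_ann => // z; split=> /de.
move=> d' e' [c aE] de; have c0 : c != 0 by apply: contraNneq a0 => c0; rewrite aE c0 mulr0.
have /de : dvdr a (c * d') by rewrite aE mulrC; apply: dvdr_refl.
by rewrite aE [d' * c]mulrC => /(dvdr_pmul2l _ _ c0).
Qed.

End Divisibility.

Section Factorial.
Variables (D : idomainType) (hD : UFD D).
Implicit Types a p q x y z : D.

Definition all_irreducible (s : seq D) := forall q, q \in s -> irreducible_elt q.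

Lemma all_irreducible_cons p s :
  all_irreducible (p :: s) <-> irreducible_elt p /\ all_irreducible s.
Proof.
split=> [irr_ps|[irr_p irr_s] q]; last by rewrite inE => /predU1P [->|/irr_s].
by split=> [|q qs]; apply: irr_ps; rewrite inE ?eqxx ?qs ?orbT.
Qed.

Lemma all_irreducible_cat s t :
  all_irreducible s -> all_irreducible t -> all_irreducible (s ++ t).
Proof. by move=> irr_s irr_t q; rewrite mem_cat => /orP [/irr_s|/irr_t]. Qed.

Lemma irreducible_factorization a :
  a != 0 -> exists2 s, all_irreducible s & assoc a (\prod_(p <- s) p).
Proof.
move=> a0; have [aU|aNU] := boolP (a \is a GRing.unit).
  exists [::] => //; rewrite big_nil; split; last exact: dvd1r.
  by exists a^-1; rewrite mulrV.
have [s [irr_s ->]] := hD.1 a a0 (negP aNU).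
by exists s => //; apply: assoc_refl.
Qed.

Lemma irreducible_assoc_factor p s t :
  irreducible_elt p -> all_irreducible s -> all_irreducible t ->
  assoc (\prod_(q <- s) q) (p * \prod_(q <- t) q) -> exists2 q, q \in s & assoc q p.
Proof.
move=> irr_p irr_s irr_t st.
have {}st : assoc (\prod_(q <- s) q) (\prod_(q <- p :: t) q) by rewrite big_cons.
have [u [tu [size_su assoc_su]]] :=
  hD.2 s (p :: t) irr_s ((all_irreducible_cons p t).2 (conj irr_p irr_t)) st.
have pu : p \in u by rewrite -(perm_mem tu) mem_head.
have ltis : (index p u < size s)%N by rewrite size_su index_mem.
exists (nth 0 s (index p u)); first exact: mem_nth.
by have := assoc_su _ ltis; rewrite nth_index.
Qed.

Lemma irreducible_prime p x y :
  irreducible_elt p -> dvdr p (x * y) -> dvdr p x \/ dvdr p y.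
Proof.
move=> irr_p [c xyE].
have [->|x0] := eqVneq x 0; first by left; apply: dvdr0.
have [->|y0] := eqVneq y 0; first by right; apply: dvdr0.
have c0 : c != 0 by apply: contraNneq (mulf_neq0 x0 y0) => c0; rewrite xyE c0 mulr0.
have [sx irr_sx xE] := irreducible_factorization x0.
have [sy irr_sy yE] := irreducible_factorization y0.
have [sc irr_sc cE] := irreducible_factorization c0.
have [|q] := @irreducible_assoc_factor p (sx ++ sy) sc irr_p
  (all_irreducible_cat irr_sx irr_sy) irr_sc.
  rewrite big_cat /=; apply: assoc_trans (assoc_mul (assoc_sym xE) (assoc_sym yE)) _.
  by rewrite xyE; apply: assoc_mul (assoc_refl p) cE.
rewrite mem_cat => /orP [qx|qy] [_ pq]; [left|right]; apply: dvdr_trans pq _.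
  by apply/(assoc_dvdr _ (assoc_sym xE))/dvdr_prod_mem.
by apply/(assoc_dvdr _ (assoc_sym yE))/dvdr_prod_mem.
Qed.

Lemma prod_irreducible_gcd s x : all_irreducible s ->
  exists g, [/\ dvdr g (\prod_(p <- s) p), dvdr g x &
    forall z, dvdr (\prod_(p <- s) p) (z * x) -> dvdr (\prod_(p <- s) p) (z * g)].
Proof.
elim: s x => [|p s IHs] x.
  by exists 1; split=> [||z _]; rewrite ?big_nil; apply: dvd1r.
move=> /all_irreducible_cons [irr_p irr_s]; have p0 := irr_p.1.
rewrite big_cons; set b := \prod_(q <- s) q.
have [[x' ->]|pNx] := pselect (dvdr p x).
  have [g [gb gx' bg]] := IHs x' irr_s.
  exists (p * g); split; [exact: dvdr_mul2l | exact: dvdr_mul2l |] => z.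
  rewrite mulrCA [z * (p * g)]mulrCA => /(dvdr_pmul2l _ _ p0)/bg.
  exact: dvdr_mul2l.
have [g [gb gx bg]] := IHs x irr_s.
exists g; split=> [||z pb_zx]; [exact: dvdr_mull | exact: gx |].
have /(irreducible_prime irr_p) [[z' zE]|//] : dvdr p (z * x).
  exact: dvdr_trans (dvdr_mulr _ (dvdr_refl p)) pb_zx.
move: pb_zx; rewrite zE -!mulrA => /(dvdr_pmul2l _ _ p0)/bg.
exact: dvdr_mul2l.
Qed.

Lemma ann_eq_gcd a x : a != 0 -> exists2 g, dvdr g a & ann_eq a x g.
Proof.
move=> a0; have [s irr_s aE] := irreducible_factorization a0.
have [g [gs gx sg]] := prod_irreducible_gcd x irr_s.
exists g; first exact/(assoc_dvdr _ (assoc_sym aE)).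
move=> z; split=> [/(assoc_dvdl _ aE)/sg/(assoc_dvdl _ (assoc_sym aE)) //|].
by move/dvdr_trans; apply; apply: dvdr_mul2l.
Qed.

Fixpoint subprods (s : seq D) : seq D :=
  if s is p :: s' then map ( *%R p) (subprods s') ++ subprods s' else [:: 1].

Lemma subprods_dvdr s y : y \in subprods s -> dvdr y (\prod_(p <- s) p).
Proof.
elim: s y => [|p s IHs] y /=; first by rewrite inE => /eqP ->; apply: dvd1r.
rewrite mem_cat big_cons => /orP [/mapP [y' /IHs y's ->]|/IHs ys].
  exact: dvdr_mul2l.
exact: dvdr_mull.
Qed.

Lemma subprods_cover s d : all_irreducible s -> dvdr d (\prod_(p <- s) p) ->
  exists2 y, y \in subprods s & assoc d y.
Proof.
elim: s d => [|p s IHs] d.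
  rewrite big_nil => _ d1; exists 1; first by rewrite inE.
  by split; last apply: dvd1r.
move=> /all_irreducible_cons [irr_p irr_s]; have p0 := irr_p.1.
rewrite big_cons => -[e pbE] /=.
have [[d' dE]|pNd] := pselect (dvdr p d).
  move: pbE; rewrite dE -mulrA => /(mulfI p0) bE.
  have [y ys d'y] := IHs d' irr_s (ex_intro _ e bE).
  by exists (p * y); rewrite ?mem_cat ?map_f //; apply: assoc_mul (assoc_refl p) d'y.
have /(irreducible_prime irr_p) [//|[e' eE]] : dvdr p (d * e).
  by rewrite -pbE; apply/dvdr_mulr/dvdr_refl.
move: pbE; rewrite eE mulrCA => /(mulfI p0) bE.
have [y ys dy] := IHs d irr_s (ex_intro _ e' bE).
by exists y; rewrite // mem_cat ys orbT.
Qed.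

End Factorial.

Section Semigroup.
Variables (S : Type) (mul : S -> S -> S) (H : S -> Prop).

Lemma P_H_refl x : P_H mul H x x. Proof. by []. Qed.

Lemma P_H_sym x y : P_H mul H x y -> P_H mul H y x.
Proof. by move=> xy uv; apply: iff_sym. Qed.

Lemma P_H_trans x y z : P_H mul H x y -> P_H mul H y z -> P_H mul H x z.
Proof. by move=> xy yz uv; apply: iff_trans (xy uv) (yz uv). Qed.

End Semigroup.

Section Transversal.
Variables (T : eqType) (R : T -> T -> Prop).
Hypotheses (R_refl : forall x, R x x) (R_sym : forall x y, R x y -> R y x)
  (R_trans : forall x y z, R x y -> R y z -> R x z).

(* [x] is sent to the position in [C] of the first element related to it. *)
Lemma has_index_transversal (C : seq T) :
  uniq C -> (forall x, exists2 c, c \in C & R x c) ->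
  {in C &, forall c c', R c c' -> c = c'} -> has_index R (size C).
Proof.
move=> uC cover sepC; pose r x c := `[< R x c >].
have find_lt x : (find (r x) C < size C)%N.
  have [c cC xc] := cover x; rewrite -has_find; apply/hasP.
  by exists c => //; apply/asboolP.
have R_nth_find x x0 : R x (nth x0 C (find (r x) C)).
  by apply/asboolP; apply: (nth_find x0 (a := r x)); rewrite has_find.
have find_mem c : c \in C -> find (r c) C = index c C.
  move=> cC; apply: eq_in_find => c' c'C; apply/asboolP/eqP => [/sepC|->//].
  by move=> /(_ cC c'C) ->.
exists (fun x => Ordinal (find_lt x)); split=> [i|x y].
  exists (tnth (in_tuple C) i); apply: val_inj => /=.
  by rewrite (tnth_nth (tnth (in_tuple C) i)) find_mem ?mem_nth ?index_uniq.
split=> [xy|/(congr1 val) /= eq_find].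
  apply: val_inj => /=; congr find; apply/funext => c.
  by apply/asboolP/asboolP => [/(R_trans (R_sym xy))|/(R_trans xy)].
apply: R_trans (R_nth_find x x) _; rewrite eq_find.
exact: R_sym (R_nth_find y x).
Qed.

End Transversal.

Section AssociateClasses.
Variable D : idomainType.
Implicit Types (a x y z : D) (X Y : Dq D).

Lemma cls_eq x y : cls x = cls y <-> assoc x y.
Proof.
by split=> [/(@eqquotP _ _ (Dq D))/asboolP|/asboolP/(@eqquotP _ _ (Dq D))].
Qed.

Lemma clsK X : cls (repr X) = X. Proof. exact: reprK. Qed.

Lemma assoc_repr_cls x : assoc (repr (cls x)) x.
Proof. by apply/cls_eq; rewrite clsK. Qed.

Lemma ideal_gen_cls a X : ideal_gen (@mulDq D) (cls a) X <-> dvdr a (repr X).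
Proof.
have dvdr_cls x y : dvdr x (repr (cls y)) <-> dvdr x y.
  exact: assoc_dvdr (assoc_repr_cls y).
split=> [[u [v ->]]|[c Xc]].
  have a_rmul : dvdr a (repr (rmul1 (@mulDq D) (cls a) v)).
    case: v => [V|] /=; apply/dvdr_cls; last exact: dvdr_refl.
    exact/dvdr_mulr/dvdr_cls/dvdr_refl.
  by case: u => [U|] //=; apply/dvdr_cls/dvdr_mull.
exists None, (Some (cls c)); rewrite /= -[LHS]clsK Xc; apply/cls_eq.
exact: assoc_sym (assoc_mul (assoc_repr_cls a) (assoc_repr_cls c)).
Qed.

Lemma P_H_ideal_cls a X Y :
  P_H (@mulDq D) (ideal_gen (@mulDq D) (cls a)) X Y <-> ann_eq a (repr X) (repr Y).
Proof.
pose J := ideal_gen (@mulDq D) (cls a).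
have Hdots_cls Z U V :
    Hdots (@mulDq D) J Z (U, V) <-> dvdr a (repr U * repr V * repr Z).
  apply: iff_trans (ideal_gen_cls _ _) _; apply: assoc_dvdr; rewrite mulrAC.
  apply: assoc_trans (assoc_repr_cls _) _.
  exact: assoc_mul (assoc_repr_cls _) (assoc_refl _).
split=> [XY z|XY [U V]]; last first.
  exact: iff_trans (Hdots_cls X U V) (iff_trans (XY _) (iff_sym (Hdots_cls Y U V))).
have zE : assoc (repr (cls z) * repr (cls 1)) z.
  by rewrite -[z in assoc _ z]mulr1; apply: assoc_mul; apply: assoc_repr_cls.
have Hdots_z Z : Hdots (@mulDq D) J Z (cls z, cls 1) <-> dvdr a (z * repr Z).
  exact: iff_trans (Hdots_cls Z _ _) (assoc_dvdr _ (assoc_mul zE (assoc_refl _))).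
exact: iff_trans (iff_sym (Hdots_z X)) (iff_trans (XY _) (Hdots_z Y)).
Qed.

Lemma exists_divisor_classes a : UFD D -> a != 0 ->
  exists C : seq (Dq D), uniq C /\ forall x, cls x \in C <-> dvdr x a.
Proof.
move=> hD a0; have [s irr_s aE] := irreducible_factorization hD a0.
exists (undup (map cls (subprods s))); split=> [|x]; first exact: undup_uniq.
rewrite mem_undup; split=> [/mapP [y /subprods_dvdr ys /cls_eq [xy _]]|].
  by apply/(assoc_dvdr _ (assoc_sym aE)); apply: dvdr_trans xy ys.
move=> /(assoc_dvdr _ aE) /(subprods_cover hD irr_s) [y ys xy].
by apply/mapP; exists y => //; apply/cls_eq.
Qed.

Lemma num_divisors_classes a (C : seq (Dq D)) :
  uniq C -> (forall x, cls x \in C <-> dvdr x a) -> num_divisors a (size C).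
Proof.
move=> uC memC; exists (map repr C); rewrite size_map; split=> //; split; [|split].
- by move=> _ /mapP [X XC ->]; apply/memC; rewrite clsK.
- move=> i j ilt jlt; rewrite !(nth_map (cls 0)) //.
  by move=> /cls_eq; rewrite !clsK => /eqP; rewrite nth_uniq // => /eqP.
- move=> x xa; exists (repr (cls x)); first exact/map_f/memC.
  exact: assoc_sym (assoc_repr_cls x).
Qed.

End AssociateClasses.

Theorem theorem4 (D : idomainType) (hD : UFD D) (a : D) (ha : a != 0) :
  exists n : nat,
    has_index (P_H (@mulDq D) (ideal_gen (@mulDq D) (cls a))) n /\
    num_divisors a n.
Proof.
have [C [uC memC]] := exists_divisor_classes hD ha.
have dvdr_C X : X \in C -> dvdr (repr X) a by rewrite -{1}[X]clsK => /memC.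
exists (size C); split; last exact: num_divisors_classes.
apply: has_index_transversal uC _ _;
  [exact: P_H_refl | exact: P_H_sym | exact: P_H_trans | |].
- move=> X; have [g ga Xg] := ann_eq_gcd hD (repr X) ha.
  exists (cls g); first exact/memC.
  apply/P_H_ideal_cls => z; apply: iff_trans (Xg z) _.
  exact: ann_eq_assoc (assoc_sym (assoc_repr_cls g)) z.
- move=> X Y XC YC /P_H_ideal_cls XY; rewrite -[X]clsK -[Y]clsK.
  exact/cls_eq/(ann_eq_assoc_divisors ha (dvdr_C X XC) (dvdr_C Y YC)).
Qed.
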